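(* Consider the NSGA-II with population size $N\ge 4(n+1)$ optimizing \textsc{LeadingOnesTrailingZeroes} (with any way of generating offspring). If in some iteration $t$ the combined population $R_t=P_t\cup Q_t$ contains an individual $x$ of rank one (in the non-dominated sorting of $R_t$), then $P_{t+1}$ contains an individual $y$ with $f(y)=f(x)$. In particular, if $P_t$ contains an individual with objective value $(k,n-k)$ for some $k\in\{0,\dots,n\}$, then so does $P_s$ for every $s\ge t$.
   Context: Search space $\{0,1\}^n$; objective $f=(f_1,f_2):\{0,1\}^n\to\mathbb{R}^2$, both objectives maximized. $x$ strictly dominates $y$ if $f_1(x)\ge f_1(y)$, $f_2(x)\ge f_2(y)$ and at least one inequality is strict. Populations are multisets of bit strings; for a population $P$, $f(P)=\{f(x):x\in P\}$. Non-dominated sorting of a population $S$: $F_1$ is the set of individuals of $S$ not strictly dominated by any individual of $S$; inductively, $F_{k+1}$ is the set of individuals of $S\setminus(F_1\cup\dots\cup F_k)$ not strictly dominated by any individual of $S\setminus(F_1\cup\dots\cup F_k)$; the rank of $x$ in $S$ is the $k$ with $x\in F_k$. Crowding distance of the individuals of a set $S$ (computed with respect to $S$): start with $\mathrm{cDis}(x)=0$ for all $x\in S$; for each $i\in\{1,2\}$, sort $S$ in ascending $f_i$-value as $S_{i.1},\dots,S_{i.|S|}$ (ties broken arbitrarily), set $\mathrm{cDis}(S_{i.1})=\mathrm{cDis}(S_{i.|S|})=+\infty$, and for $2\le j\le |S|-1$ add $\frac{f_i(S_{i.j+1})-f_i(S_{i.j-1})}{f_i(S_{i.|S|})-f_i(S_{i.1})}$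 to $\mathrm{cDis}(S_{i.j})$ (if $f_i$ is constant on $S$, these summands are taken to be $0$). The NSGA-II with population size $N$: $P_0$ consists of $N$ independent uniformly random bit strings; in iteration $t=0,1,2,\dots$ it generates an offspring population $Q_t$ of $N$ individuals, sets $R_t=P_t\cup Q_t$ (multiset union, $2N$ individuals), computes the fronts $F_1,F_2,\dots$ of $R_t$, lets $i^*$ be minimal with $\sum_{i\le i^*}|F_i|\ge N$, computes the crowding distance of each individual of $F_i$ ($i\le i^*$) with respect to $F_i$, and sets $P_{t+1}=F_1\cup\dots\cup F_{i^*-1}\cup\tilde F_{i^*}$, where $\tilde F_{i^*}$ consists of the $N-\sum_{i<i^*}|F_i|$ individuals of $F_{i^*}$ with largest crowding distance, ties broken uniformly at random. \textsc{LeadingOnesTrailingZeroes}: $f(x)=\left(\sum_{i=1}^n\prod_{j=1}^i x_j,\ \sum_{i=1}^n\prod_{j=i}^n(1-x_j)\right)$ (number of leading ones, number of trailing zeros). Its Pareto front is $\{(k,n-k):k\in\{0,\dots,n\}\}$. *)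

From mathcomp Require Import all_boot all_order all_algebra.
Set Implicit Arguments. Unset Strict Implicit. Unset Printing Implicit Defensive.
Import Order.TTheory GRing.Theory Num.Theory.

Definition bitstring (n : nat) := n.-tuple bool.
Definition bs0 (n : nat) : bitstring n := nseq_tuple n false.

Definition LO (n : nat) (x : bitstring n) : nat :=
  \sum_(i < n) \prod_(j < n | (j <= i)%N) (tnth x j : nat).
Definition TZ (n : nat) (x : bitstring n) : nat :=
  \sum_(i < n) \prod_(j < n | (i <= j)%N) ((~~ tnth x j) : nat).
Definition lotz (n : nat) (x : bitstring n) : nat * nat := (LO x, TZ x).

Definition sdom (a b : nat * nat) : bool :=
  [&& (b.1 <= a.1)%N, (b.2 <= a.2)%N & ((b.1 < a.1)%N || (b.2 < a.2)%N)].

Section Sorting.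
(* Individuals of the combined population are indexed by 'I_m (multiset
   semantics: equal bit strings at different indices are distinct
   individuals); fv gives their objective values. *)
Variables (m : nat) (fv : 'I_m -> nat * nat).

Definition nondom_in (A : {set 'I_m}) : {set 'I_m} :=
  [set i in A | [forall j in A, ~~ sdom (fv j) (fv i)]].

Fixpoint remaining (k : nat) : {set 'I_m} :=
  match k with
  | 0 => setT
  | k'.+1 => remaining k' :\: nondom_in (remaining k')
  end.

(* front k = F_{k+1} (0-indexed) *)
Definition front (k : nat) : {set 'I_m} := nondom_in (remaining k).

Definition cum (k : nat) : nat := #|\bigcup_(j < k) front j|.

Definition is_sorting (g : 'I_m -> nat) (F : {set 'I_m}) (s : seq 'I_m) : Prop :=
  perm_eq s (enum F) /\ sorted (fun a b => (g a <= g b)%N) s.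

(* contribution of one objective to the crowding distance;
   None encodes +infinity *)
Definition cd_part (g : 'I_m -> nat) (s : seq 'I_m) (x : 'I_m) : option rat :=
  let j := index x s in
  if (j == 0)%N || (j == (size s).-1) then None
  else
    let gfirst := g (nth x s 0) in
    let glast := g (nth x s (size s).-1) in
    Some (if glast == gfirst then 0%R
          else (((g (nth x s j.+1))%:R - (g (nth x s j.-1))%:R)
                / ((glast)%:R - (gfirst)%:R))%R).

Definition cdist (s1 s2 : seq 'I_m) (x : 'I_m) : option rat :=
  match cd_part (fun i => (fv i).1) s1 x, cd_part (fun i => (fv i).2) s2 x with
  | Some a, Some b => Some (a + b)%R
  | _, _ => None
  end.

Definition cd_le (a b : option rat) : bool :=
  match a, b with
  | _, None => true
  | None, Some _ => false
  | Some a, Some b => (a <= b)%R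
  end.

End Sorting.

Definition objv (n : nat) (R : seq (bitstring n)) (i : 'I_(size R)) : nat * nat :=
  lotz (nth (bs0 n) R i).
Arguments objv {n} R i.

(* Pn is a possible outcome of the NSGA-II survival selection of N
   individuals out of the combined population R (over all choices of
   tie-breaking in the sortings and in the crowding-distance selection). *)
Definition nsga_survivors (n N : nat) (R : seq (bitstring n)) (Pn : seq (bitstring n)) : Prop :=
  exists k : nat,
    (N <= cum (objv R) k.+1)%N /\ (forall j, (j < k)%N -> (cum (objv R) j.+1 < N)%N) /\
    exists s1 s2 : seq 'I_(size R),
      is_sorting (fun i => (objv R i).1) (front (objv R) k) s1 /\
      is_sorting (fun i => (objv R i).2) (front (objv R) k) s2 /\
      exists T : {set 'I_(size R)},
        T \subset front (objv R) k /\
        #|T| = (N - cum (objv R) k)%N /\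
        (forall a b, a \in T -> b \in front (objv R) k :\: T ->
           cd_le (cdist (objv R) s1 s2 b) (cdist (objv R) s1 s2 a)) /\
        perm_eq Pn [seq nth (bs0 n) R i
                   | i : 'I_(size R) <- enum ((\bigcup_(j < k) front (objv R) j) :|: T)].

Definition nsga_step (n N : nat) (P Q Pn : seq (bitstring n)) : Prop :=
  size P = N /\ size Q = N /\ nsga_survivors N (P ++ Q) Pn.

From mathcomp Require Import all_boot all_order all_algebra zify lra.
Import Order.TTheory GRing.Theory Num.Theory.

Set Implicit Arguments.
Unset Strict Implicit.

(* In the first front the two objectives determine each other, so every objective
   value there is carried by an individual that comes first among the equal
   f_1-values in the f_1-sorting; its crowding distance is positive.  If the
   selection dropped this value while filling the remaining N slots from the
   first front, all N selected individuals would have positive crowding distance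
   as well.  But an individual with positive crowding distance is the first or
   the last of its run of equal values in one of the two sortings, and each
   objective takes only n + 1 values, so there are at most 4 (n + 1) <= N such
   individuals.  Persistence follows since LO + TZ <= n puts every individual of
   value (k, n - k) in the first front. *)

Lemma prod_bits_le1 n (P : pred 'I_n) (F : 'I_n -> bool) : \prod_(j < n | P j) (F j : nat) <= 1.
Proof.
apply: (big_ind (fun v => v <= 1)) => // [a b ha hb|j _]; last by case: (F j).
by rewrite -(muln1 1) leq_mul.
Qed.

Lemma LO_add_TZ_le n (x : bitstring n) : LO x + TZ x <= n.
Proof.
rewrite /LO /TZ -big_split /= -[X in _ <= X]card_ord -sum1_card.
apply: leq_sum => i _.
rewrite (bigD1 i) //= [X in _ + X](bigD1 i) //=.
have := prod_bits_le1 (fun j : 'I_n => (j <= i) && (j != i)) (tnth x).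
have := prod_bits_le1 (fun j : 'I_n => (i <= j) && (j != i)) (fun j => ~~ tnth x j).
by case: (tnth x i) => /= ? ?; rewrite ?mul1n ?mul0n ?addn0 ?add0n.
Qed.

Lemma card_le_bounded_inj (T : finType) (A : {set T}) (g : T -> nat) n :
  (forall b, g b <= n) -> {in A &, injective g} -> #|A| <= n.+1.
Proof.
move=> g_le g_inj; rewrite -(card_ord n.+1).
apply: (leq_card_in (fun b => inord (g b) : 'I_n.+1)) => b b' hb hb' /(congr1 val).
by rewrite /= !inordK ?ltnS //; apply: g_inj.
Qed.

Definition cd_pos (o : option rat) : bool := if o is Some r then (0 < r)%R else true.

Lemma cd_pos_le a b : cd_le a b -> cd_pos a -> cd_pos b.
Proof. by case: a b => [a|] [b|] //= /[swap]; apply: lt_le_trans. Qed.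

Section Runs.
Variables (m : nat) (g : 'I_m -> nat) (s : seq 'I_m).
Hypothesis s_sorted : sorted (fun a b => g a <= g b) s.
Implicit Types (a b : 'I_m).

(* The ascription makes [index] use the equality of ['I_m], as [cd_part] does,
   rather than the one inherited from the finite type of the bound variable. *)
Definition run_first : {set 'I_m} :=
  [set b in s | let j := index (b : 'I_m) s in (j == 0) || (g (nth b s j.-1) < g b)].
Definition run_last : {set 'I_m} :=
  [set b in s | let j := index (b : 'I_m) s in (j == (size s).-1) || (g b < g (nth b s j.+1))].

Lemma sorted_nth_mono x0 i j : i <= j -> j < size s -> g (nth x0 s i) <= g (nth x0 s j).
Proof.
move=> le_ij lt_js.
have g_trans : transitive (fun a b => g a <= g b) by move=> a b c; apply: leq_trans.
apply: (sorted_leq_nth g_trans (fun a => leqnn (g a)) x0 s_sorted) => //.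
by rewrite inE (leq_ltn_trans le_ij).
Qed.

Lemma run_first_mem {b} : b \in run_first -> b \in s.
Proof. by rewrite inE => /andP[]. Qed.

Lemma run_last_mem {b} : b \in run_last -> b \in s.
Proof. by rewrite inE => /andP[]. Qed.

Lemma run_first_gt {b b'} : b \in s -> b' \in run_first -> index b s < index b' s -> g b < g b'.
Proof.
rewrite inE => bs /andP[b's /orP[/eqP->//|lt_prev] lt_jj'].
have : index b' s < size s by rewrite index_mem.
rewrite -(nth_index b' bs) => lt_j's; apply: leq_ltn_trans lt_prev.
by apply: sorted_nth_mono; lia.
Qed.

Lemma run_last_lt {b b'} : b \in run_last -> b' \in s -> index b s < index b' s -> g b < g b'.
Proof.
rewrite inE => /andP[bs hb] b's lt_jj'.
have lt_j's : index b' s < size s by rewrite index_mem.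
case/orP: hb => [/eqP eq_last|lt_next]; first lia.
rewrite -[b'](nth_index b b's); apply: leq_trans lt_next _.
exact: sorted_nth_mono.
Qed.

Lemma run_first_inj : {in run_first &, injective g}.
Proof.
move=> b b' hb hb' e; have bs := run_first_mem hb; have b's := run_first_mem hb'.
case: (ltngtP (index b s) (index b' s)) => h.
- by have := run_first_gt bs hb' h; rewrite e ltnn.
- by have := run_first_gt b's hb h; rewrite e ltnn.
- by rewrite -(nth_index b bs) h nth_index.
Qed.

Lemma run_last_inj : {in run_last &, injective g}.
Proof.
move=> b b' hb hb' e; have bs := run_last_mem hb; have b's := run_last_mem hb'.
case: (ltngtP (index b s) (index b' s)) => h.
- by have := run_last_lt hb b's h; rewrite e ltnn.
- by have := run_last_lt hb' bs h; rewrite e ltnn.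
- by rewrite -(nth_index b bs) h nth_index.
Qed.

Lemma exists_run_first_eq (i : 'I_m) : i \in s -> exists2 a, a \in run_first & g a = g i.
Proof.
move=> i_s; pose p b := g b == g i.
have has_p : has p s by apply/hasP; exists i; rewrite /p.
set j := find p s; have lt_js : j < size s by rewrite -has_find.
pose a := nth i s j; have /eqP pa : p a := nth_find i has_p.
have index_a : index a s = j.
  apply/eqP; rewrite eqn_leq index_nth //= leqNgt; apply/negP => lt.
  by have := before_find i lt; rewrite nth_index ?mem_nth // /p pa eqxx.
exists a => //; rewrite inE mem_nth //= index_a.
case: (posnP j) => [->//|j_gt0]; apply/orP; right.
have lt_pred : j.-1 < j by rewrite ltn_predL.
have le_prev := @sorted_nth_mono i j.-1 j (leq_pred j) lt_js.
have := before_find i lt_pred; rewrite /p -pa => /negbT ne_prev.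
by rewrite (set_nth_default i) ?(ltn_trans lt_pred) // ltn_neqAle ne_prev le_prev.
Qed.

Lemma cd_part_nonneg b : b \in s -> cd_le (Some 0%R) (cd_part g s b).
Proof.
move=> bs; have : index b s < size s by rewrite index_mem.
rewrite /cd_part.
set j := index b s => lt_js; case: ifP => //= /norP[j_neq0 j_neqlast].
have := @sorted_nth_mono b j.-1 j.+1 ltac:(lia) ltac:(lia).
have := @sorted_nth_mono b 0 (size s).-1 ltac:(lia) ltac:(lia).
by case: ifP => // _ h1 h2; apply: divr_ge0; rewrite subr_ge0 ler_nat.
Qed.

Lemma cd_part_run_first b : b \in run_first -> cd_pos (cd_part g s b).
Proof.
move=> hb; have bs := run_first_mem hb; move: hb; rewrite inE bs /=.
have : index b s < size s by rewrite index_mem.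
have := nth_index b bs; rewrite /cd_part.
set j := index b s => nth_j lt_js hb; case: ifP => //= /norP[j_neq0 j_neqlast].
rewrite (negbTE j_neq0) /= in hb.
have := @sorted_nth_mono b j j.+1 ltac:(lia) ltac:(lia).
have := @sorted_nth_mono b 0 j.-1 ltac:(lia) ltac:(lia).
have := @sorted_nth_mono b j.+1 (size s).-1 ltac:(lia) ltac:(lia).
rewrite nth_j => h1 h2 h3.
case: ifP => [/eqP|_]; first lia.
by apply: divr_gt0; rewrite subr_gt0 ltr_nat; lia.
Qed.

Lemma cd_part_interior b :
  b \in s -> b \notin run_first -> b \notin run_last -> cd_part g s b = Some 0%R.
Proof.
move=> bs; rewrite !inE bs /= !negb_or => /andP[j_neq0 hL] /andP[j_neqlast hR].
have lt_js : index b s < size s by rewrite index_mem.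
have h1 := @sorted_nth_mono b (index b s).-1 (index b s) ltac:(lia) lt_js.
have h2 := @sorted_nth_mono b (index b s) (index b s).+1 ltac:(lia) ltac:(lia).
rewrite nth_index // in h1 h2.
rewrite /cd_part (negbTE j_neq0) (negbTE j_neqlast) /=.
have -> : g (nth b s (index b s).+1) = g (nth b s (index b s).-1) by lia.
by rewrite subrr mul0r; case: ifP.
Qed.

End Runs.

Section CrowdingDistance.
Variables (n m : nat) (fv : 'I_m -> nat * nat) (F : {set 'I_m}) (s1 s2 : seq 'I_m).
Hypothesis fv_sum_le : forall b, (fv b).1 + (fv b).2 <= n.

Let g1 b := (fv b).1.
Let g2 b := (fv b).2.
Hypothesis s1_sorting : is_sorting g1 F s1.
Hypothesis s2_sorting : is_sorting g2 F s2.

Lemma mem_sorting g s : is_sorting g F s -> s =i F.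
Proof. by case=> perm_s _ b; rewrite (perm_mem perm_s) mem_enum. Qed.

Lemma cd_pos_mem_runs b : b \in F -> cd_pos (cdist fv s1 s2 b) ->
  b \in (run_first g1 s1 :|: run_last g1 s1) :|: (run_first g2 s2 :|: run_last g2 s2).
Proof.
case: s1_sorting s2_sorting => _ sorted1 [_ sorted2] bF pos_b.
have bs1 : b \in s1 by rewrite (mem_sorting s1_sorting).
have bs2 : b \in s2 by rewrite (mem_sorting s2_sorting).
apply/negPn/negP; rewrite !in_setU !negb_or => /andP[/andP[nL1 nR1] /andP[nL2 nR2]].
move: pos_b; rewrite /cdist.
by rewrite (cd_part_interior sorted1) ?(cd_part_interior sorted2) //= addr0 ltxx.
Qed.

Lemma card_cd_pos_le : #|[set b in F | cd_pos (cdist fv s1 s2 b)]| <= 4 * (n + 1).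
Proof.
have g1_le b : g1 b <= n by have := fv_sum_le b; rewrite /g1; lia.
have g2_le b : g2 b <= n by have := fv_sum_le b; rewrite /g2; lia.
have sub : [set b in F | cd_pos (cdist fv s1 s2 b)] \subset
    (run_first g1 s1 :|: run_last g1 s1) :|: (run_first g2 s2 :|: run_last g2 s2).
  by apply/subsetP => b; rewrite inE => /andP[]; apply: cd_pos_mem_runs.
case: s1_sorting s2_sorting => _ sorted1 [_ sorted2].
apply: leq_trans (subset_leq_card sub) _.
have -> : 4 * (n + 1) = (n.+1 + n.+1) + (n.+1 + n.+1) by lia.
apply: leq_trans (leq_card_setU _ _) _; apply: leq_add;
  apply: leq_trans (leq_card_setU _ _) _; apply: leq_add.
- exact: card_le_bounded_inj g1_le (run_first_inj sorted1).
- exact: card_le_bounded_inj g1_le (run_last_inj sorted1).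
- exact: card_le_bounded_inj g2_le (run_first_inj sorted2).
- exact: card_le_bounded_inj g2_le (run_last_inj sorted2).
Qed.

Lemma exists_cd_pos_eq i : F = nondom_in fv setT -> i \in F ->
  exists a, [/\ a \in F, fv a = fv i & cd_pos (cdist fv s1 s2 a)].
Proof.
move=> F_front iF; case: s1_sorting s2_sorting => _ sorted1 [_ sorted2].
have [a a_first ea] := exists_run_first_eq sorted1 (etrans (mem_sorting s1_sorting i) iF).
have aF : a \in F by rewrite -(mem_sorting s1_sorting) (run_first_mem a_first).
exists a; split=> //.
  move: ea aF iF; rewrite /g1 F_front !inE /= => ea /forallP/(_ i) + /forallP/(_ a).
  by rewrite !inE /sdom; case: (fv a) (fv i) ea => ? ? [? ?] /= -> ? ?; congr pair; lia.
have := cd_part_run_first sorted1 a_first.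
have := cd_part_nonneg sorted2 (etrans (mem_sorting s2_sorting a) aF).
rewrite /cdist; case: cd_part => [r1|]; case: cd_part => [r2|] //=; lra.
Qed.

End CrowdingDistance.

Lemma objv_sum_le n (R : seq (bitstring n)) b : (objv R b).1 + (objv R b).2 <= n.
Proof. exact: LO_add_TZ_le. Qed.

Lemma survivors_keep_front0 n N (R Pn : seq (bitstring n)) (i : 'I_(size R)) :
  4 * (n + 1) <= N -> nsga_survivors N R Pn -> i \in front (objv R) 0 ->
  exists2 y, y \in Pn & lotz y = lotz (nth (bs0 n) R i).
Proof.
move=> hN [k [_ [_ [s1 [s2 [sorting1 [sorting2 [T [sub_T [card_T [cd_T perm_Pn]]]]]]]]]]] i_front.
have {perm_Pn} survives b :
    b \in (\bigcup_(j < k) front (objv R) j) :|: T -> nth (bs0 n) R b \in Pn.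
  by move=> hb; rewrite (perm_mem perm_Pn); apply: map_f; rewrite mem_enum.
case: k => [|k] in sorting1 sorting2 sub_T card_T cd_T survives *; last first.
  exists (nth (bs0 n) R i) => //; apply/survives/setUP; left.
  by apply/bigcupP; exists ord0.
rewrite /cum big_ord0 cards0 subn0 in card_T.
have [a [a_front ea a_pos]] := exists_cd_pos_eq sorting1 sorting2 (erefl _) i_front.
have [aT|aT] := boolP (a \in T).
  by exists (nth (bs0 n) R a); [apply/survives; rewrite big_ord0 set0U | apply: ea].
have sub : a |: T \subset [set b in front (objv R) 0 | cd_pos (cdist (objv R) s1 s2 b)].
  apply/subsetP => b; rewrite in_setU1 inE => /orP[/eqP->|bT]; first by rewrite a_front.
  by rewrite (subsetP sub_T) //= (cd_pos_le (cd_T b a bT _) a_pos) // inE aT.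
have := card_cd_pos_le (@objv_sum_le n R) sorting1 sorting2.
by move: (subset_leq_card sub); rewrite cardsU1 aT card_T; lia.
Qed.

Lemma max_sum_in_front0 m (fv : 'I_m -> nat * nat) i :
  (forall j, (fv j).1 + (fv j).2 <= (fv i).1 + (fv i).2) -> i \in front fv 0.
Proof.
move=> sum_le; rewrite !inE; apply/forallP => j; apply/implyP => _.
by have := sum_le j; rewrite /sdom; lia.
Qed.

Lemma survivors_keep_optimal n N (R Pn : seq (bitstring n)) k (x : bitstring n) :
  4 * (n + 1) <= N -> nsga_survivors N R Pn -> k <= n -> x \in R -> lotz x = (k, n - k) ->
  exists2 y, y \in Pn & lotz y = (k, n - k).
Proof.
move=> hN surv le_kn xR fx.
pose i := Ordinal (etrans (index_mem x R) xR).
have fi : objv R i = (k, n - k) by rewrite /objv nth_index.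
have [|y yPn fy] := survivors_keep_front0 hN surv (i := i).
  by apply: max_sum_in_front0 => j; have := objv_sum_le j; rewrite fi /=; lia.
by exists y; rewrite // fy -fi.
Qed.

Theorem lemma7 (n N : nat) (hN : (4 * (n + 1) <= N)%N) :
  (forall P Q Pn : seq (bitstring n), nsga_step N P Q Pn ->
     forall i : 'I_(size (P ++ Q)), i \in front (objv (P ++ Q)) 0 ->
       exists2 y, y \in Pn & lotz y = lotz (nth (bs0 n) (P ++ Q) i))
  /\
  (forall (pop off : nat -> seq (bitstring n)),
     (forall t, nsga_step N (pop t) (off t) (pop t.+1)) ->
     forall (t k : nat), (k <= n)%N ->
       (exists2 x, x \in pop t & lotz x = (k, n - k)) ->
       forall s, (t <= s)%N -> exists2 y, y \in pop s & lotz y = (k, n - k)).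
Proof.
split=> [P Q Pn [_ [_ surv]] i|pop off step t k le_kn opt_t s /subnKC <-].
  exact: survivors_keep_front0 hN surv.
elim: (s - t) => [|d [y y_pop fy]]; first by rewrite addn0.
have [_ [_ surv]] := step (t + d).
by rewrite addnS; apply: survivors_keep_optimal hN surv le_kn _ fy; rewrite mem_cat y_pop.
Qed.
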